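(* Let $A$ be an infinite set, $\mathcal{L}\in V(\Omega(A))$, and $I,J,K$ sets. If $f:A^{I}\to A^{J}$ and $g:A^{J}\to A^{K}$ are uniformly continuous, then $\overline{g}^{\mathcal{L}}\circ\overline{f}^{\mathcal{L}}=\overline{g\circ f}^{\mathcal{L}}$ as maps $\mathcal{L}^{I}\to\mathcal{L}^{K}$.
   Context: For each $a\in A$ let $\hat{a}$ be a constant symbol, and for each $n\geq1$ and each $h:A^{n}\to A$ let $\hat{h}$ be an $n$-ary operation symbol. $\Omega(A)$ is the algebra with universe $A$ interpreting $\hat{a}$ as $a$ and $\hat{h}$ as $h$; $V(\Omega(A))$ is the variety it generates. Partitions: for $h:X\to Y$, $\Pi(h)$ is the partition of $X$ into nonempty fibers, and for a partition $P$ of $Y$, $[h]_{-1}(P)=\{h^{-1}(R):R\in P\}\setminus\{\emptyset\}$. For $i_{1},\dots,i_{n}\in I$, $\mathcal{P}_{i_{1},\dots,i_{n}}$ is the partition of $A^{I}$ with $u,v$ in the same block iff $u(i_{k})=v(i_{k})$ for all $k$; $\mathcal{P}(A,I)$ is the filter of partitions of $A^{I}$ coarser than some $\mathcal{P}_{i_{1},\dots,i_{n}}$. $\mathbf{F}(A,I)=\{h\in A^{A^{I}}:\Pi(h)\in\mathcal{P}(A,I)\}$, a subalgebra of $\Omega(A)^{A^{I}}$, freely generated in $V(\Omega(A))$ by the projections $\pi_{i}(u)=u(i)$; every $h\in\mathbf{F}(A,I)$ can be written $h=\hat{r}^{\mathbf{F}(A,I)}(\pi_{i_{1}},\dots,\pi_{i_{n}})$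 for some $r:A^{n}\to A$ and $i_{1},\dots,i_{n}\in I$. Uniform continuity: $h:X\to Y$ with $X,Y$ carrying filters of partitions $F,G$ is uniformly continuous if $[h]_{-1}(P)\in F$ for all $P\in G$; $A^{I}$ carries $\mathcal{P}(A,I)$ and $A$ carries all partitions of $A$ (so uniformly continuous maps $A^{I}\to A$ are exactly the elements of $\mathbf{F}(A,I)$). For $h=\hat{r}^{\mathbf{F}(A,I)}(\pi_{i_{1}},\dots,\pi_{i_{n}})\in\mathbf{F}(A,I)$, define $\overline{h}^{\mathcal{L}}:\mathcal{L}^{I}\to\mathcal{L}$ by $\overline{h}^{\mathcal{L}}((\ell_{i})_{i\in I})=\hat{r}^{\mathcal{L}}(\ell_{i_{1}},\dots,\ell_{i_{n}})$ (this is well defined). For uniformly continuous $f:A^{I}\to A^{J}$, define $\overline{f}^{\mathcal{L}}:\mathcal{L}^{I}\to\mathcal{L}^{J}$ by $\overline{f}^{\mathcal{L}}(\alpha)=(\overline{\pi_{j}\circ f}^{\mathcal{L}}(\alpha))_{j\in J}$. *)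

From mathcomp Require Import all_boot.
From Stdlib Require Import ClassicalEpsilon.
Unset Printing Implicit Defensive.

Definition infinite (A : Type) : Prop :=
  ~ exists s : list A, forall a : A, List.In a s.

Lemma infinite_inhabited (A : Type) : infinite A -> inhabited A.
Proof.
move=> hA; case: (classic (inhabited A)) => // hn; exfalso; apply: hA.
by exists nil => a; apply: hn; constructor.
Qed.

(** Algebras of the signature of Omega(A): a constant symbol for each a : A
    and an n-ary operation symbol for each h : A^n -> A, n >= 1
    (we write the arity as n.+1, n : nat, and A^m as 'I_m -> A). *)
Record omega_alg (A : Type) := OmegaAlg {
  carrier :> Type;
  cst : A -> carrier;
  op : forall n : nat, (('I_n.+1 -> A) -> A) -> ('I_n.+1 -> carrier) -> carrier
}.

Definition Omega (A : Type) : omega_alg A :=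
  OmegaAlg A A (fun a => a) (fun n h x => h x).

Inductive term (A : Type) : Type :=
| Var : nat -> term A
| Cst : A -> term A
| Op : forall n : nat, (('I_n.+1 -> A) -> A) -> ('I_n.+1 -> term A) -> term A.

Fixpoint eval (A : Type) (L : omega_alg A) (v : nat -> L) (t : term A) : L :=
  match t with
  | Var k => v k
  | Cst a => cst A L a
  | Op n h args => op A L n h (fun i => eval A L v (args i))
  end.

(** L belongs to the variety V(Omega(A)) generated by Omega(A):
    L satisfies every identity satisfied by Omega(A) (Birkhoff). *)
Definition in_variety (A : Type) (L : omega_alg A) : Prop :=
  forall s t : term A,
    (forall v : nat -> A, eval A (Omega A) v s = eval A (Omega A) v t) ->
    forall w : nat -> L, eval A L w s = eval A L w t.

(** Partitions of X are represented by their equivalence relations. *)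
Definition is_equiv (X : Type) (R : X -> X -> Prop) : Prop :=
  (forall x, R x x) /\ (forall x y, R x y -> R y x) /\
  (forall x y z, R x y -> R y z -> R x z).

(** The filter P(A,I) of partitions of A^I coarser than some P_{i1,...,in}. *)
Definition PAI (A I : Type) (R : (I -> A) -> (I -> A) -> Prop) : Prop :=
  is_equiv (I -> A) R /\
  exists s : list I, forall u v : I -> A,
      (forall i, List.In i s -> u i = v i) -> R u v.

(** Uniform continuity of f : A^I -> A^J, where A^I, A^J carry P(A,I), P(A,J);
    [f]_{-1}(P) corresponds to the relation (u,v) |-> R (f u) (f v). *)
Definition unif_cont (A I J : Type) (f : (I -> A) -> (J -> A)) : Prop :=
  forall R, PAI A J R -> PAI A I (fun u v => R (f u) (f v)).

(** Representations h = r^(pi_{i1},...,pi_{in}) of h : A^I -> A.  An arity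
    n = 0 stands for the constant symbol r() (only needed when I is empty). *)
Record rep (A I : Type) := Rep {
  rn : nat;
  rf : ('I_rn -> A) -> A;
  ridx : 'I_rn -> I
}.

Definition represents (A I : Type) (h : (I -> A) -> A) (r : rep A I) : Prop :=
  forall u : I -> A, h u = rf A I r (fun k => u (ridx A I r k)).

Lemma ord0_False (k : 'I_0) : False.
Proof. by case: k. Qed.

Definition I0_elim (T : Type) (k : 'I_0) : T := False_rect T (ord0_False k).

Definition applyL (A : Type) (L : omega_alg A) (n : nat) :
    (('I_n -> A) -> A) -> ('I_n -> L) -> L :=
  match n with
  | 0 => fun r _ => cst A L (r (I0_elim A))
  | m.+1 => fun r x => op A L m r x
  end.

Definition applyRep (A I : Type) (L : omega_alg A) (r : rep A I) (l : I -> L) : L :=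
  applyL A L (rn A I r) (rf A I r) (fun k => l (ridx A I r k)).

Definition rep_inhabited (A I : Type) (HA : inhabited A) : inhabited (rep A I) :=
  match HA with inhabits a => inhabits (Rep A I 0 (fun _ => a) (I0_elim I)) end.

(** A chosen representation of h (meaningful when h is in F(A,I)). *)
Definition chosen_rep (A I : Type) (HA : inhabited A) (h : (I -> A) -> A) : rep A I :=
  epsilon (rep_inhabited A I HA) (represents A I h).

Definition hbar (A I : Type) (HA : inhabited A) (L : omega_alg A)
    (h : (I -> A) -> A) (l : I -> L) : L :=
  applyRep A I L (chosen_rep A I HA h) l.

Definition fbar (A I J : Type) (HA : inhabited A) (L : omega_alg A)
    (f : (I -> A) -> (J -> A)) (alpha : I -> L) : J -> L :=
  fun j => hbar A I HA L (fun u => f u j) alpha.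

(** Each coordinate of a uniformly continuous map depends on finitely many
    input coordinates, hence is represented by some [r : A^n -> A] applied to
    projections.  Given representations of [pi_k o g], of the [pi_j o f] and of
    [pi_k o g o f], plugging the second ones into the first gives an identity
    of [Omega(A)] between two terms, once the finitely many indices involved
    are numbered as variables.  Since [L] lies in the variety generated by
    [Omega(A)], the same identity holds in [L], and read back it says exactly
    that both sides of the theorem agree at coordinate [k]. *)
From mathcomp Require Import all_boot.
From Stdlib Require Import ClassicalEpsilon FunctionalExtensionality.

Lemma mem_In (T : eqType) (x : T) (s : seq T) : x \in s -> List.In x s.
Proof. by elim: s => //= y s IHs; rewrite in_cons => /orP [/eqP ->|/IHs]; auto. Qed.

Section ListIndex.
Context {I : Type}.

(* [index] for a type without decidable equality, decided classically. *)
Fixpoint index_in (s : list I) (i : I) : nat :=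
  match s with
  | nil => 0
  | x :: s' => if excluded_middle_informative (x = i) then 0 else (index_in s' i).+1
  end.

Lemma index_in_lt (s : list I) (i : I) : List.In i s -> index_in s i < size s.
Proof.
elim: s => //= x s IHs [->|/IHs]; case: excluded_middle_informative => //.
Qed.

Lemma nth_index_in (d : I) (s : list I) (i : I) :
  List.In i s -> nth d s (index_in s i) = i.
Proof.
elim: s => //= x s IHs [->|/IHs]; case: excluded_middle_informative => //= ->.
Qed.

End ListIndex.

Section Representations.
Context {A : Type}.

Lemma unif_cont_comp {I J K : Type}
    {f : (I -> A) -> (J -> A)} {g : (J -> A) -> (K -> A)} :
  unif_cont A I J f -> unif_cont A J K g -> unif_cont A I K (fun u => g (f u)).
Proof. by move=> uf ug R /ug /uf. Qed.

Lemma represents_of_finite_support {I : Type} (a0 : A)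
    (h : (I -> A) -> A) (s : list I) :
  (forall u v : I -> A, (forall i, List.In i s -> u i = v i) -> h u = h v) ->
  exists r, represents A I h r.
Proof.
move=> hs.
pose extend (x : 'I_(size s) -> A) (i : I) :=
  if insub (index_in s i) is Some k then x k else a0.
exists (Rep A I (size s) (fun x => h (extend x)) (tnth (in_tuple s))) => u /=.
apply: hs => i s_i; rewrite /extend insubT ?index_in_lt // => lt_is.
by rewrite (tnth_nth i) /= nth_index_in.
Qed.

Lemma represents_chosen_rep {I : Type} (HA : inhabited A) (h : (I -> A) -> A) :
  (exists r, represents A I h r) -> represents A I h (chosen_rep A I HA h).
Proof. exact: epsilon_spec. Qed.

Lemma unif_cont_represents_coord {I J : Type} (HA : inhabited A)
    {f : (I -> A) -> (J -> A)} (j : J) :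
  unif_cont A I J f ->
  represents A I (fun u => f u j) (chosen_rep A I HA (fun u => f u j)).
Proof.
move=> uf; apply: represents_chosen_rep; case: HA => a0.
have coord_PAI : PAI A J (fun v w => v j = w j).
  split; first by split; [|split]; [|move=> x y ->|move=> x y z -> ->].
  by exists [:: j] => u v; apply; left.
have [_ [s hs]] := uf _ coord_PAI.
exact: represents_of_finite_support hs.
Qed.

Lemma applyRep_ext {I : Type} {L : omega_alg A} (q : rep A I) (l l' : I -> L) :
  (forall k, l (ridx A I q k) = l' (ridx A I q k)) ->
  applyRep A I L q l = applyRep A I L q l'.
Proof.
by move=> e; rewrite /applyRep; congr applyL; apply: functional_extensionality.
Qed.

Lemma applyRep_Omega {I : Type} {h : (I -> A) -> A} {q : rep A I} (x : I -> A) :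
  represents A I h q -> applyRep A I (Omega A) q x = h x.
Proof.
rewrite /applyRep => ->; case: (rn A I q) (rf A I q) (ridx A I q) => //= r idx.
by congr r; apply: functional_extensionality => -[].
Qed.

(* As in [applyL], arity 0 stands for the constant symbol. *)
Definition rep_app {I : Type} (q : rep A I) (ts : I -> term A) : term A :=
  (match rn A I q as n return (('I_n -> A) -> A) -> ('I_n -> I) -> term A with
   | 0 => fun r _ => Cst A (r (I0_elim A))
   | m.+1 => fun r idx => Op A m r (fun k => ts (idx k))
   end) (rf A I q) (ridx A I q).

Lemma eval_rep_app {I : Type} (L : omega_alg A) (w : nat -> L)
    (q : rep A I) (ts : I -> term A) :
  eval A L w (rep_app q ts) = applyRep A I L q (fun i => eval A L w (ts i)).
Proof. by rewrite /rep_app /applyRep; case: (rn A I q) (rf A I q) (ridx A I q). Qed.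

Definition rep_support {I : Type} (q : rep A I) : list I :=
  List.map (ridx A I q) (ord_enum (rn A I q)).

Lemma In_rep_support {I : Type} (q : rep A I) (k : 'I_(rn A I q)) :
  List.In (ridx A I q k) (rep_support q).
Proof. exact/List.in_map/mem_In/mem_ord_enum. Qed.

(* Number the indices occurring in [r o (R j)_j] and in [r'] by their position
   in a list [s]; the valuation [w] sends position [p] back to [alpha (s_p)]. *)
Lemma in_variety_applyRep_comp {I J : Type} {L : omega_alg A}
    (a0 : A) (hL : in_variety A L)
    (r : rep A J) (R : J -> rep A I) (r' : rep A I) :
  (forall x : I -> A,
     applyRep A J (Omega A) r (fun j => applyRep A I (Omega A) (R j) x)
     = applyRep A I (Omega A) r' x) ->
  forall alpha : I -> L,
  applyRep A J L r (fun j => applyRep A I L (R j) alpha) = applyRep A I L r' alpha.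
Proof.
move=> id_Omega alpha.
pose s := (rep_support r' ++ List.concat
  (List.map (fun k => rep_support (R (ridx A J r k))) (ord_enum (rn A J r))))%list.
pose vars (i : I) := Var A (index_in s i).
pose w (p : nat) := nth (cst A L a0) [seq alpha i | i <- s] p.
have w_alpha i : List.In i s -> w (index_in s i) = alpha i.
  by move=> s_i; rewrite /w (nth_map i) ?index_in_lt ?nth_index_in.
have terms_Omega : forall v : nat -> A,
    eval A (Omega A) v (rep_app r (fun j => rep_app (R j) vars))
    = eval A (Omega A) v (rep_app r' vars).
  move=> v; rewrite !eval_rep_app -[RHS]id_Omega.
  by congr applyRep; apply: functional_extensionality => j; rewrite eval_rep_app.
have := hL _ _ terms_Omega w; rewrite !eval_rep_app /= => eq_w.
have r'_in_s t : List.In (ridx A I r' t) s.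
  by apply: List.in_or_app; left; exact: In_rep_support.
have R_in_s k t : List.In (ridx A I (R (ridx A J r k)) t) s.
  apply: List.in_or_app; right; apply/List.in_concat; eexists; split.
    exact/List.in_map/mem_In/mem_ord_enum.
  exact: In_rep_support.
transitivity (applyRep A J L r (fun j => eval A L w (rep_app (R j) vars))).
  apply: applyRep_ext => k; rewrite eval_rep_app.
  by apply: applyRep_ext => t /=; rewrite w_alpha.
by rewrite eq_w; apply: applyRep_ext => t; rewrite w_alpha.
Qed.

End Representations.

Theorem mainTheorem6 (A : Type) (hA : infinite A) (L : omega_alg A)
    (hL : in_variety A L) (I J K : Type)
    (f : (I -> A) -> (J -> A)) (g : (J -> A) -> (K -> A)) :
  unif_cont A I J f -> unif_cont A J K g ->
  (fun alpha : I -> L =>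
     fbar A J K (infinite_inhabited A hA) L g
       (fbar A I J (infinite_inhabited A hA) L f alpha))
  = fbar A I K (infinite_inhabited A hA) L (fun u => g (f u)).
Proof.
move=> uf ug; set HA := infinite_inhabited A hA; have [a0] := HA.
apply: functional_extensionality => alpha; apply: functional_extensionality => k.
rewrite /fbar /hbar; apply: in_variety_applyRep_comp a0 hL _ _ _ _ alpha => x.
rewrite (applyRep_Omega _ (unif_cont_represents_coord HA k ug)).
rewrite (applyRep_Omega _ (unif_cont_represents_coord HA k (unif_cont_comp uf ug))).
by congr g; apply: functional_extensionality => j;
  rewrite (applyRep_Omega _ (unif_cont_represents_coord HA j uf)).
Qed.
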